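(* Let $\varepsilon>0$, $\Omega\subset\mathbb{R}^2$ bounded open, $u\in\mathcal{SF}_\varepsilon(\Omega)$ and $R\in\mathcal{R}_\varepsilon(u)$. Then exactly one of the following holds: (i) $R\in\mathcal{T}_\varepsilon$; (ii) every triangle $T\in\mathcal{T}_\varepsilon$ with $T\subset R$ has two edges in $\mathcal{N}_\varepsilon(u)$; (iii) there are exactly two triangles $T\in\mathcal{T}_\varepsilon$, $T\subset R$, having two edges in $\mathcal{C}_\varepsilon(u)$, and all the other triangles $T\subset R$ of $\mathcal{T}_\varepsilon$ have two edges in $\mathcal{N}_\varepsilon(u)$.
   Context: $\mathcal{L}=\{ae_1+b\hat e_2:a,b\in\mathbb{Z}\}$ with $e_1=(1,0)$, $\hat e_2=\frac12(1,\sqrt3)$, $\mathcal{L}_\varepsilon=\varepsilon\mathcal{L}$; $\mathcal{T}_\varepsilon$ is the set of closed triangles with vertices in $\mathcal{L}_\varepsilon$ pairwise at distance $\varepsilon$; $\mathcal{E}_\varepsilon$ the set of segments $[i,j]$, $i,j\in\mathcal{L}_\varepsilon$, $|i-j|=\varepsilon$. $n=(0,0,1)$; $\mathcal{SF}_\varepsilon(\Omega)$ is the set of $u:\mathcal{L}_\varepsilon\to\mathbb{S}^2$ with $u=n$ on $\mathcal{L}_\varepsilon\setminus\Omega$. $\mathcal{N}_\varepsilon(u)=\{[i,j]\in\mathcal{E}_\varepsilon:u(i)=-u(j)\}$, $\mathcal{C}_\varepsilon(u)=\mathcal{E}_\varepsilon\setminus\mathcal{N}_\varepsilon(u)$. Two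 triangles of $\mathcal{T}_\varepsilon$ are neighbours if their intersection is an edge in $\mathcal{N}_\varepsilon(u)$, and connected if joined by a finite chain of consecutive neighbours. $\mathcal{R}_\varepsilon(u)$ is the set of admissible interpolation regions: unions of pairwise connected triangles of $\mathcal{T}_\varepsilon$ that are maximal with respect to inclusion. *)

From HB Require Import structures.
From mathcomp Require Import all_boot all_order all_algebra.
From mathcomp Require Import all_classical all_reals all_analysis.
Set Implicit Arguments. Unset Strict Implicit. Unset Printing Implicit Defensive.
Import Order.TTheory GRing.Theory Num.Theory.
Import numFieldNormedType.Exports.
Local Open Scope ring_scope.
Local Open Scope classical_set_scope.

(* Lattice points a e1 + b e2hat are indexed by (a, b) : int * int. *)
Definition latpt := (int * int)%type.

Section TriangularLattice.
Variable R : realType.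

Definition lat_point (eps : R) (p : latpt) : R * R :=
  (eps * (p.1%:~R + p.2%:~R / 2), eps * (p.2%:~R * Num.sqrt 3 / 2)).

Definition lat_dist (eps : R) (p q : latpt) : R :=
  Num.sqrt (((lat_point eps p).1 - (lat_point eps q).1) ^+ 2
          + ((lat_point eps p).2 - (lat_point eps q).2) ^+ 2).

Definition adjacent (eps : R) (p q : latpt) : Prop := lat_dist eps p q = eps.

(* T_eps: a (closed) triangle is represented by its set of three vertices *)
Definition is_triangle (eps : R) (T : set latpt) : Prop :=
  exists i j k, [/\ T = [set i; j; k], adjacent eps i j, adjacent eps j k
                 & adjacent eps i k].

(* E_eps: a segment [i,j] is represented by its set of two endpoints *)
Definition is_edge (eps : R) (e : set latpt) : Prop :=
  exists i j, e = [set i; j] /\ adjacent eps i j.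

Definition edge_of (eps : R) (e T : set latpt) : Prop := is_edge eps e /\ e `<=` T.

Definition on_sphere (v : 'rV[R]_3) : Prop := \sum_(k < 3) (v 0 k) ^+ 2 = 1.
Definition north : 'rV[R]_3 := \row_(k < 3) ((val k == 2%N)%:R).

Definition SF (eps : R) (Om : set (R * R)) (u : latpt -> 'rV[R]_3) : Prop :=
  (forall i, on_sphere (u i)) /\ (forall i, ~ Om (lat_point eps i) -> u i = north).

Definition in_N (eps : R) (u : latpt -> 'rV[R]_3) (e : set latpt) : Prop :=
  exists i j, [/\ e = [set i; j], adjacent eps i j & u i = - u j].
Definition in_C (eps : R) (u : latpt -> 'rV[R]_3) (e : set latpt) : Prop :=
  is_edge eps e /\ ~ in_N eps u e.

Definition neighbours (eps : R) (u : latpt -> 'rV[R]_3) (T T' : set latpt) : Prop :=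
  [/\ is_triangle eps T, is_triangle eps T' & in_N eps u (T `&` T')].

Inductive connected (eps : R) (u : latpt -> 'rV[R]_3) : set latpt -> set latpt -> Prop :=
  | conn_refl T : connected eps u T T
  | conn_step T1 T2 T3 : connected eps u T1 T2 -> neighbours eps u T2 T3 ->
                         connected eps u T1 T3.

Definition pw_connected (eps : R) (u : latpt -> 'rV[R]_3) (S : set (set latpt)) : Prop :=
  (forall T, S T -> is_triangle eps T) /\
  (forall T T', S T -> S T' -> connected eps u T T').

(* R_eps(u): an admissible interpolation region is the union of a maximal
   family of pairwise connected triangles; it is represented by that family *)
Definition admissible_region (eps : R) (u : latpt -> 'rV[R]_3) (S : set (set latpt)) : Prop :=
  pw_connected eps u S /\
  (forall S', pw_connected eps u S' -> S `<=` S' -> S' = S).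

Definition two_edges_N (eps : R) (u : latpt -> 'rV[R]_3) (T : set latpt) : Prop :=
  exists e1 e2, [/\ e1 <> e2, edge_of eps e1 T, edge_of eps e2 T,
                    in_N eps u e1 & in_N eps u e2].
Definition two_edges_C (eps : R) (u : latpt -> 'rV[R]_3) (T : set latpt) : Prop :=
  exists e1 e2, [/\ e1 <> e2, edge_of eps e1 T, edge_of eps e2 T,
                    in_C eps u e1 & in_C eps u e2].

End TriangularLattice.

Definition exactly_one_of3 (A B C : Prop) : Prop :=
  (A /\ ~ B /\ ~ C) \/ (~ A /\ B /\ ~ C) \/ (~ A /\ ~ B /\ C).

From Pilot Require Import Defs.
From HB Require Import structures.
From mathcomp Require Import all_boot all_order all_algebra.
From mathcomp Require Import all_classical all_reals all_analysis.
From mathcomp Require Import finmap zify ring lra.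
Import Order.TTheory GRing.Theory Num.Theory.
Import numFieldNormedType.Exports.
Local Open Scope ring_scope.
Local Open Scope classical_set_scope.
Set Implicit Arguments. Unset Strict Implicit.

(* A triangle is adjacent, through an edge of N_eps(u), to the triangle obtained by reflecting
   it across that edge, so its neighbours correspond to its edges in N_eps(u).  The three edges
   cannot all lie in N_eps(u), since u(i) = -u(j) = u(k) = -u(i) is impossible on the sphere.
   Hence every triangle has at most two neighbours; it has two edges in N_eps(u) iff it has
   two neighbours, and two edges in C_eps(u) iff it has at most one.  As u = n off the bounded
   set Omega, only finitely many triangles have an edge in N_eps(u).  By maximality and
   connectedness a region is therefore either one isolated triangle (i), or a finite connected
   graph of maximum degree two without isolated vertices: a cycle (ii) or a path, whose two
   end triangles are exactly those with two edges in C_eps(u) (iii). *)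

Section PathGraph.
Variables (V : choiceType) (E : V -> V -> Prop).
Hypothesis Esym : forall x y, E x y -> E y x.
Hypothesis Eirr : forall x, ~ E x x.

Inductive connected_in (S : set V) (x : V) : V -> Prop :=
  | connected_in_refl : connected_in S x x
  | connected_in_step y z : connected_in S x y -> S z -> E y z -> connected_in S x z.

Definition connected_set (S : set V) :=
  forall x y, S x -> S y -> connected_in S x y.

Definition max_degree2 (S : set V) := forall x y z w, S x -> S y -> S z -> S w ->
  E x y -> E x z -> E x w -> [\/ y = z, y = w | z = w].

Definition leaf (S : set V) (x : V) :=
  exists y, [/\ S y, E x y & forall z, S z -> E x z -> z = y].

Lemma connected_in_mem S x y : connected_in S x y -> S x -> S y.
Proof. by elim. Qed.

Lemma connected_setD1_leaf S a b : connected_set S -> S a -> b <> a ->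
  (forall z, S z -> E a z -> z = b) -> connected_set (S `\ a).
Proof.
move=> conS Sa ba nbr_a x y [Sx xa] [Sy ya].
suff [[]|[]] : (y = a /\ connected_in (S `\ a) x b) \/
               (y <> a /\ connected_in (S `\ a) x y) by [].
elim: (conS x y Sx Sy) => [|y0 z _ IH Sz Ey0z]; first by right; split=> //; left.
case: IH => [[y0a xb]|[y0a xy0]].
  by rewrite y0a in Ey0z; rewrite (nbr_a z Sz Ey0z); right.
have [za|za] := pselect (z = a); last by right; split=> //; apply: connected_in_step xy0 _ Ey0z.
left; split=> //; suff <- : y0 = b by [].
by apply: nbr_a; [exact: (connected_in_mem xy0 (conj Sx xa)).1 | rewrite -za; apply: Esym].
Qed.

Lemma leaf_setD1 S a b c : max_degree2 S -> S a -> S b -> S c ->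
  E a b -> E b c -> c <> a -> leaf (S `\ a) b.
Proof.
move=> deg2 Sa Sb Sc Eab Ebc ca; exists c; split=> // z [Sz za] Ebz.
by case: (deg2 b a c z Sb Sa Sc Sz (Esym Eab) Ebc Ebz) => [ac|az|->] //; [case: ca | case: za].
Qed.

(* Induction on the size of [S]: [b], the neighbour of [a], is a leaf of [S `\ a] unless
   [S = [set a; b]]. *)
Lemma path_leaves S a : finite_set S -> connected_set S -> max_degree2 S ->
  S a -> leaf S a ->
  exists b, [/\ S b, b <> a, leaf S b & forall c, S c -> leaf S c -> c = a \/ c = b].
Proof.
move=> finS; have [n] := ubnP #|` fset_set S|.
elim: n S a finS => // n IH S a finS; rewrite ltnS => cardS conS deg2 Sa [b [Sb Eab nbr_a]].
have ba : b <> a by move=> ba; rewrite ba in Eab; exact: Eirr Eab.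
have [[c [Sc Ebc ca]]|b_end] := pselect (exists c, [/\ S c, E b c & c <> a]); last first.
  have S_ab x : S x -> x = a \/ x = b.
    move=> Sx; elim: (conS a x Sa Sx) => [|y z _ [->|->] Sz Eyz]; first by left.
      by right; apply: nbr_a.
    by left; apply: contrapT => za; apply: b_end; exists z.
  exists b; split=> // [|x Sx _]; last exact: S_ab.
  exists a; split=> // [|z Sz Ebz]; first exact: Esym.
  by apply: contrapT => za; apply: b_end; exists z.
have cardSa : (#|` fset_set (S `\ a)| < n)%N.
  apply: leq_trans cardS; rewrite fset_setD1 // [X in (_ < X)%N](cardfsD1 a).
  by rewrite in_fset_set ?mem_set.
have degSa : max_degree2 (S `\ a).
  by move=> x y z w [Sx _] [Sy _] [Sz _] [Sw _]; apply: deg2.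
have [d [[Sd da] db [y [[Sy ya] Edy nbr_d]] leaves]] :=
  IH _ _ (finite_setD _ finS) cardSa (connected_setD1_leaf conS Sa ba nbr_a) degSa
     (conj Sb ba) (leaf_setD1 deg2 Sa Sb Sc Eab Ebc ca).
have nbr_not_a x z : S x -> x <> b -> E x z -> z <> a.
  by move=> Sx xb Exz za; apply: xb; apply: nbr_a => //; rewrite -za; apply: Esym.
exists d; split=> //.
  exists y; split=> // z Sz Edz; apply: nbr_d => //; split=> //; exact: nbr_not_a Sd db Edz.
move=> x Sx [z [Sz Exz nbr_x]].
have [->|xa] := pselect (x = a); first by left.
have [xb|xb] := pselect (x = b).
  by case: ca; rewrite xb in nbr_x; rewrite (nbr_x c Sc Ebc) (nbr_x a Sa (Esym Eab)).
have leaf_x : leaf (S `\ a) x.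
  exists z; split=> [|//|w [Sw _] Exw]; last exact: nbr_x.
  by split=> //; exact: nbr_not_a Sx xb Exz.
by right; case: (leaves x (conj Sx xa) leaf_x) => // /xb.
Qed.

End PathGraph.

(* [(a, b)] stands for [a e1 + b e2hat], whose squared length is [a^2 + a b + b^2]. *)
Definition lat_norm2 (d : latpt) : int := d.1 * d.1 + d.1 * d.2 + d.2 * d.2.

Definition lat_adj (p q : latpt) : Prop := lat_norm2 (p - q) = 1.

Definition lat_tri (i j k : latpt) : Prop := [/\ lat_adj i j, lat_adj j k & lat_adj i k].

Lemma lat_norm2_eq1 (d : latpt) : lat_norm2 d = 1 ->
  [/\ d.1 = 1 & d.2 = 0] \/ [/\ d.1 = -1 & d.2 = 0] \/ [/\ d.1 = 0 & d.2 = 1] \/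
  [/\ d.1 = 0 & d.2 = -1] \/ [/\ d.1 = 1 & d.2 = -1] \/ [/\ d.1 = -1 & d.2 = 1].
Proof.
case: d => a b; rewrite /lat_norm2 /= => h.
have [ha hb] : a * a <= 1 /\ b * b <= 1 by split; nia.
nia.
Qed.

Lemma lat_adj_sym p q : lat_adj p q -> lat_adj q p.
Proof. by rewrite /lat_adj -opprB /lat_norm2 /= !mulrNN. Qed.

Lemma lat_adj_neq p q : lat_adj p q -> p <> q.
Proof. by move=> + epq; rewrite /lat_adj epq subrr. Qed.

Lemma lat_tri_neq i j k : lat_tri i j k -> [/\ i <> j, j <> k & i <> k].
Proof. by case=> /lat_adj_neq ij /lat_adj_neq jk /lat_adj_neq ik. Qed.

Lemma lat_tri_rotate i j k : lat_tri i j k -> lat_tri j k i.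
Proof. by case=> ij jk ik; split=> //; apply: lat_adj_sym. Qed.

Lemma lat_tri_swap i j k : lat_tri i j k -> lat_tri i k j.
Proof. by case=> ij jk ik; split=> //; apply: lat_adj_sym. Qed.

(* [i + j - k] is the reflection of [k] across the edge [ij]. *)
Lemma lat_tri_flip i j k : lat_tri i j k -> lat_tri i j (i + j - k) /\ i + j - k <> k.
Proof.
case: i j k => [i1 i2] [j1 j2] [k1 k2]; rewrite /lat_tri /lat_adj /lat_norm2 /=.
move=> [h1 h2 h3]; split; first by split; nia.
case=> e1 e2; nia.
Qed.

Lemma lat_tri_apex i j k z : lat_tri i j k -> lat_tri i j z -> z = k \/ z = i + j - k.
Proof.
case: i j k z => [i1 i2] [j1 j2] [k1 k2] [z1 z2] [ij jk ik] [_ jz iz].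
suff : (z1 = k1 /\ z2 = k2) \/ (z1 = i1 + j1 - k1 /\ z2 = i2 + j2 - k2).
  by case=> -[-> ->]; [left | right].
move: jk jz (lat_norm2_eq1 ij) (lat_norm2_eq1 ik) (lat_norm2_eq1 iz).
rewrite /lat_adj /lat_norm2 /=; lia.
Qed.

Section Embedding.
Variable R : realType.

Lemma lat_distE (eps : R) (p q : latpt) : 0 <= eps ->
  lat_dist eps p q = eps * Num.sqrt (lat_norm2 (p - q))%:~R.
Proof.
move=> eps_ge0; set s := Num.sqrt (3 : R).
have s2 : s ^+ 2 = 3 by rewrite sqr_sqrtr // ler0n.
rewrite -[eps in RHS]ger0_norm // -sqrtr_sqr -sqrtrM ?sqr_ge0 //.
rewrite /lat_dist /lat_point /lat_norm2 /= -/s; congr Num.sqrt.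
rewrite !(rmorphD, rmorphM, rmorphB) /=.
set a1 := p.1%:~R; set a2 := p.2%:~R; set b1 := q.1%:~R; set b2 := q.2%:~R.
have -> : (eps * (a2 * s / 2) - eps * (b2 * s / 2)) ^+ 2 =
          eps ^+ 2 * (a2 - b2) ^+ 2 * s ^+ 2 / 4 by field.
by rewrite s2; field.
Qed.

Lemma adjacentE (eps : R) (p q : latpt) : 0 < eps -> Defs.adjacent eps p q <-> lat_adj p q.
Proof.
move=> eps_gt0; rewrite /Defs.adjacent /lat_adj lat_distE ?ltW //.
split=> [|->]; last by rewrite sqrtr1 mulr1.
rewrite -[RHS]mulr1 => /(mulfI (lt0r_neq0 eps_gt0)) sq1.
have : (0 : R) < (lat_norm2 (p - q))%:~R by rewrite -sqrtr_gt0 sq1.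
by move/ltW/sqr_sqrtr; rewrite sq1 expr1n => /esym h; apply/eqP; rewrite -(eqr_int R) h.
Qed.

End Embedding.

Lemma set2_inj (T : Type) (a b c d : T) : [set a; b] = [set c; d] ->
  (a = c /\ b = d) \/ (a = d /\ b = c).
Proof.
move=> /seteqP[sub1 sub2].
have [] := sub1 a (or_introl erefl); have [] := sub1 b (or_intror erefl);
  have [] := sub2 c (or_introl erefl); have [] := sub2 d (or_intror erefl);
  move=> /= e1 e2 e3 e4; first [left; split; congruence | right; split; congruence].
Qed.

Lemma set3_rotate (T : Type) (a b c : T) : [set a; b; c] = [set b; c; a].
Proof. by apply/seteqP; split=> x /=; tauto. Qed.

Lemma set3_swap (T : Type) (a b c : T) : [set a; b; c] = [set a; c; b].
Proof. by apply/seteqP; split=> x /=; tauto. Qed.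

Lemma set3_complete (T : Type) (a b c x y : T) : [set a; b; c] x -> [set a; b; c] y ->
  x <> y -> exists z, [set a; b; c] = [set x; y; z].
Proof.
case=> [[->|->]|->] [[->|->]|->] // _;
  [exists c | exists b | exists c | exists a | exists b | exists a].
all: by apply/seteqP; split=> z /=; tauto.
Qed.


Lemma on_sphere_neq_opp (R : realType) (v : 'rV[R]_3) : on_sphere v -> v <> - v.
Proof.
move=> sv vN; have v0 k : v 0 k = 0.
  by have := congr1 (fun w : 'rV[R]_3 => w 0 k) vN; rewrite /= mxE; lra.
by move: sv; rewrite /on_sphere big1 => [/eqP|k _]; [rewrite eq_sym oner_eq0 | rewrite v0 expr0n].
Qed.

Section Triangles.
Variables (R : realType) (eps : R) (u : latpt -> 'rV[R]_3).
Hypothesis eps_gt0 : 0 < eps.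
Hypothesis u_sphere : forall i, on_sphere (u i).
Local Notation nb := (neighbours eps u).

Lemma is_triangleE T :
  is_triangle eps T <-> exists i j k, T = [set i; j; k] /\ lat_tri i j k.
Proof.
split=> [[i [j [k [-> ij jk ik]]]]|[i [j [k [-> [ij jk ik]]]]]]; exists i, j, k;
  by split=> //; try split; apply/(adjacentE _ _ eps_gt0).
Qed.

Lemma is_edge_pair x y : lat_adj x y -> is_edge eps [set x; y].
Proof. by move=> xy; exists x, y; split=> //; apply/adjacentE. Qed.

Lemma in_N_pairE x y : lat_adj x y -> in_N eps u [set x; y] = (u x = - u y).
Proof.
move=> xy; rewrite propeqE; split; last by move=> N; exists x, y; split=> //; apply/adjacentE.
case=> i [j [e _ Nij]]; have [[-> ->]|[-> ->]] := set2_inj e => //.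
by rewrite Nij opprK.
Qed.

Lemma in_C_pairE x y : lat_adj x y -> in_C eps u [set x; y] = ~ in_N eps u [set x; y].
Proof.
by move=> xy; rewrite propeqE /in_C; split=> [[]|] // ?; split=> //; apply: is_edge_pair.
Qed.

Lemma triangle_not_pair i j k x y : lat_tri i j k -> [set i; j; k] <> [set x; y].
Proof.
case/lat_tri_neq=> ij jk ik /seteqP[sub _].
have [] := sub i (or_introl (or_introl erefl)); have [] := sub j (or_introl (or_intror erefl));
  have [] := sub k (or_intror erefl); move=> /= e1 e2 e3; congruence.
Qed.

Lemma edge_of_triangleE i j k e : lat_tri i j k ->
  edge_of eps e [set i; j; k] <-> [\/ e = [set i; j], e = [set j; k] | e = [set i; k]].
Proof.
move=> t; have [ij jk ik] := t; split; last first.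
  by case=> ->; split=> [|x /=]; first [apply: is_edge_pair | tauto].
case=> -[x [y [-> /(adjacentE _ _ eps_gt0) /lat_adj_neq xy]]] sub; move: xy.
have [[->|->]|->] := sub x (or_introl erefl); have [[->|->]|->] := sub y (or_intror erefl);
  move=> xy; try by case: xy.
all: rewrite ?(setUC [set j] [set i]) ?(setUC [set k] [set j]) ?(setUC [set k] [set i]).
all: by [constructor 1 | constructor 2 | constructor 3].
Qed.

Lemma triangle_edges_neq i j k : lat_tri i j k ->
  [/\ [set i; j] <> [set j; k], [set i; j] <> [set i; k] & [set j; k] <> [set i; k]].
Proof.
case/lat_tri_neq=> ij jk ik.
by split=> e; case: (set2_inj e) => -[e1 e2]; congruence.
Qed.

Lemma two_edges_triangleE (P : set latpt -> Prop) i j k : lat_tri i j k ->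
  (exists e1 e2, [/\ e1 <> e2, edge_of eps e1 [set i; j; k], edge_of eps e2 [set i; j; k],
                     P e1 & P e2]) =
  ((P [set i; j] /\ P [set j; k]) \/ (P [set i; j] /\ P [set i; k]) \/
   (P [set j; k] /\ P [set i; k])).
Proof.
move=> t; have [n1 n2 n3] := triangle_edges_neq t; rewrite propeqE; split; last first.
  have [Eij Ejk Eik] : [/\ edge_of eps [set i; j] [set i; j; k],
      edge_of eps [set j; k] [set i; j; k] & edge_of eps [set i; k] [set i; j; k]].
    by split; apply/(edge_of_triangleE _ t); [constructor 1 | constructor 2 | constructor 3].
  by case=> [|[|]] [P1 P2]; [exists [set i; j], [set j; k] | exists [set i; j], [set i; k]
                            | exists [set j; k], [set i; k]].
case=> e1 [e2 [e12 /(edge_of_triangleE _ t) E1 /(edge_of_triangleE _ t) E2 P1 P2]].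
by case: E1 E2 e12 P1 P2 => -> [] -> //; tauto.
Qed.

Lemma triangle_adj a b c x y : lat_tri a b c -> [set a; b; c] x -> [set a; b; c] y ->
  x <> y -> lat_adj x y.
Proof.
case=> ab bc ac [[->|->]|->] [[->|->]|->] // _; by apply: lat_adj_sym.
Qed.

Lemma triangle_across i j k T : lat_tri i j k -> is_triangle eps T -> T i -> T j ->
  T <> [set i; j; k] -> T = [set i; j; i + j - k].
Proof.
move=> t /is_triangleE[a [b [c [-> tabc]]]] Ti Tj neqT.
have [ij _ _] := lat_tri_neq t.
have [z eT] := set3_complete Ti Tj ij.
have [zi zj] : z <> i /\ z <> j.
  by split=> e; apply: (@triangle_not_pair _ _ _ i j tabc); rewrite eT e;
    apply/seteqP; split=> x /=; tauto.
have tz : lat_tri i j z.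
  by split; apply: (triangle_adj tabc); rewrite ?eT /=; first [tauto | congruence].
rewrite eT in neqT *; have [zk|->] // := lat_tri_apex t tz.
by case: neqT; rewrite zk.
Qed.

Lemma flip_meet i j k : lat_tri i j k ->
  [set i; j; k] `&` [set i; j; i + j - k] = [set i; j].
Proof.
move=> t; have [_ fk] := lat_tri_flip t; apply/seteqP; split=> x /=; last by tauto.
case=> [[[xi|xj]|xk] [[xi'|xj']|xf]]; try tauto.
by case: fk; rewrite -xf xk.
Qed.

Lemma neighbours_flip i j k : lat_tri i j k -> u i = - u j ->
  nb [set i; j; k] [set i; j; i + j - k].
Proof.
move=> t Nij; have [tf _] := lat_tri_flip t; have [ij _ _] := t.
split; [apply/is_triangleE; exists i, j, k | apply/is_triangleE; exists i, j, (i + j - k) | ] => //.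
by rewrite flip_meet // in_N_pairE.
Qed.

Lemma neighboursE i j k T : lat_tri i j k -> nb [set i; j; k] T <->
  (T = [set i; j; i + j - k] /\ u i = - u j) \/
  (T = [set j; k; j + k - i] /\ u j = - u k) \/
  (T = [set i; k; i + k - j] /\ u i = - u k).
Proof.
move=> t; have [ij jk ik] := t; split; last first.
  case=> [|[|]] [-> N]; first exact: neighbours_flip.
    by rewrite set3_rotate; apply: neighbours_flip => //; apply: lat_tri_rotate.
  by rewrite set3_swap; apply: neighbours_flip => //; apply: lat_tri_swap.
case=> _ tT NT.
have E : edge_of eps ([set i; j; k] `&` T) [set i; j; k].
  by split; [case: NT => x [y [-> xy _]]; exists x, y | exact: subIsetl].
have neqT : T <> [set i; j; k].
  move=> eT; case: NT => x [y [eTxy _ _]].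
  by apply: (@triangle_not_pair _ _ _ x y t); rewrite -eTxy eT setIid.
have sub : [set i; j; k] `&` T `<=` T by exact: subIsetr.
case/(edge_of_triangleE _ t): E => e; rewrite e in NT sub; rewrite in_N_pairE // in NT.
- left; split=> //; apply: triangle_across t tT (sub i _) (sub j _) neqT; [left | right] => //.
- right; left; split=> //.
  apply: triangle_across (lat_tri_rotate t) tT (sub j _) (sub k _) _; [left | right | ] => //.
  by rewrite -set3_rotate.
- right; right; split=> //.
  apply: triangle_across (lat_tri_swap t) tT (sub i _) (sub k _) _; [left | right | ] => //.
  by rewrite -set3_swap.
Qed.

Lemma flip_triangles_neq i j k : lat_tri i j k ->
  [/\ [set i; j; i + j - k] <> [set j; k; j + k - i],
      [set i; j; i + j - k] <> [set i; k; i + k - j] &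
      [set j; k; j + k - i] <> [set i; k; i + k - j]].
Proof.
move=> t; have [n1 n2 n3] := triangle_edges_neq t.
have M1 := flip_meet t.
have M2 := flip_meet (lat_tri_rotate t); rewrite -set3_rotate in M2.
have M3 := flip_meet (lat_tri_swap t); rewrite -set3_swap in M3.
by split=> e; [apply: n1; rewrite -M1 -M2 e | apply: n2; rewrite -M1 -M3 e
              | apply: n3; rewrite -M2 -M3 e].
Qed.

Lemma neighbours_sym T T' : nb T T' -> nb T' T.
Proof. by case=> tT tT' N; split=> //; rewrite setIC. Qed.

Lemma neighbours_irr T : ~ nb T T.
Proof.
case=> /is_triangleE[i [j [k [-> t]]]] _; rewrite setIid => -[x [y [e _ _]]].
exact: (triangle_not_pair t e).
Qed.

Lemma two_edges_N_neighbours T : is_triangle eps T ->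
  two_edges_N eps u T <-> exists T1 T2, [/\ T1 <> T2, nb T T1 & nb T T2].
Proof.
case/is_triangleE=> i [j [k [-> t]]]; have [ij jk ik] := t.
have [n1 n2 n3] := flip_triangles_neq t.
rewrite /two_edges_N two_edges_triangleE // !in_N_pairE //; split.
  case=> [|[|]] [N1 N2]; [exists [set i; j; i + j - k], [set j; k; j + k - i]
    | exists [set i; j; i + j - k], [set i; k; i + k - j]
    | exists [set j; k; j + k - i], [set i; k; i + k - j]];
  by split=> //; apply/neighboursE => //; tauto.
case=> T1 [T2 [T12 /(neighboursE _ t) h1 /(neighboursE _ t) h2]].
by case: h1 h2 T12 => [|[|]] [-> N1] [|[|]] [-> N2] //; tauto.
Qed.

Lemma two_edges_C_not_N T : is_triangle eps T ->
  two_edges_C eps u T <-> ~ two_edges_N eps u T.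
Proof.
case/is_triangleE=> i [j [k [-> t]]]; have [ij jk ik] := t.
rewrite /two_edges_C /two_edges_N !two_edges_triangleE // !in_C_pairE //.
have [] := pselect (in_N eps u [set i; j]); have [] := pselect (in_N eps u [set j; k]);
  have [] := pselect (in_N eps u [set i; k]); tauto.
Qed.

Lemma neighbours_max_degree2 S : max_degree2 nb S.
Proof.
move=> T T1 T2 T3 _ _ _ _ n1; have [/is_triangleE[i [j [k [eT t]]]] _ _] := n1.
move: n1; rewrite eT => /(neighboursE _ t) h1 /(neighboursE _ t) h2 /(neighboursE _ t) h3.
have no3 : u i = - u j -> u j = - u k -> u i = - u k -> False.
  by move=> Nij Njk Nik; apply: (on_sphere_neq_opp (u_sphere k)); rewrite -Nik Nij Njk opprK.
case: h1 h2 h3 => [|[|]] [-> N1] [|[|]] [-> N2] [|[|]] [-> N3];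
  by [constructor 1 | constructor 2 | constructor 3 | exfalso; apply: no3].
Qed.
End Triangles.

Definition lat_box (K : nat) : set latpt := [set p | (`|p.1| <= K)%N /\ (`|p.2| <= K)%N].

Lemma finite_lat_box K : finite_set (lat_box K).
Proof.
have fin_int : finite_set [set z : int | (`|z| <= K)%N].
  apply: (@sub_finite_set _ _ ((fun n : nat => n%:Z) @` `I_K.+1 `|`
                               (fun n : nat => - n%:Z) @` `I_K.+1)); last first.
    by rewrite finite_setU; split; apply: finite_image; exact: finite_II.
  case=> n /= nK; [left; exists n | right; exists n.+1] => //=; rewrite ?NegzE; lia.
exact: (finite_setX fin_int fin_int).
Qed.

Lemma lat_box_adj K p q : lat_box K p -> lat_adj p q -> lat_box K.+1 q.
Proof.
case: p q => [p1 p2] [q1 q2] [/= h1 h2] /lat_norm2_eq1 /= dir; split=> /=; lia.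
Qed.

Section Finiteness.
Variables (R : realType) (eps : R) (Om : set (R * R)) (u : latpt -> 'rV[R]_3).
Hypotheses (eps_gt0 : 0 < eps) (Om_bounded : bounded_set Om) (uSF : SF eps Om u).

Lemma lat_point_coord_le (p : latpt) :
  eps * `|p.1%:~R| <= 2 * `|lat_point eps p| /\ eps * `|p.2%:~R| <= 2 * `|lat_point eps p|.
Proof.
rewrite prod_normE /lat_point /=.
set a : R := p.1%:~R; set b : R := p.2%:~R; set s := Num.sqrt (3 : R).
have s1 : 1 <= s by rewrite -sqrtr1 ler_sqrt // ler1n.
set x := eps * (a + b / 2); set y := eps * (b * s / 2).
have hx : `|x| <= Num.max `|x| `|y| by rewrite le_max lexx.
have hy : `|y| <= Num.max `|x| `|y| by rewrite le_max lexx orbT.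
have hb : eps * `|b| <= 2 * `|y|.
  rewrite /y !normrM normfV (gtr0_norm eps_gt0) (ger0_norm (sqrtr_ge0 _)) -/s.
  rewrite (ger0_norm (ler0n _ 2)); have := mulr_ge0 (ltW eps_gt0) (normr_ge0 b); nra.
have ea : eps * `|a| = `|x - eps * b / 2|.
  by rewrite -[eps in LHS](gtr0_norm eps_gt0) -normrM /x; congr `|_|; ring.
have eb : `|eps * b / 2| = eps * `|b| / 2.
  by rewrite !normrM normfV (gtr0_norm eps_gt0) (ger0_norm (ler0n _ 2)).
have := ler_normB x (eps * b / 2); rewrite -ea eb => ha.
split; lra.
Qed.

Lemma lat_box_of_bounded : exists K, forall p, Om (lat_point eps p) -> lat_box K p.
Proof.
have [M [_ HM]] := Om_bounded.
have B_ge0 : 0 <= 2 * `|M + 1| / eps by rewrite divr_ge0 ?(ltW eps_gt0) // mulr_ge0.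
set K := Num.Def.archi_bound (2 * `|M + 1| / eps); exists K => p Op.
have normp : `|lat_point eps p| <= M + 1 by apply: (HM (M + 1)) => //; lra.
have coord (z : int) : eps * `|z%:~R| <= 2 * `|lat_point eps p| ->
    (`|z| <= K)%N.
  move=> hz; apply: ltnW; rewrite -(ltr_nat R) natr_absz intr_norm.
  apply: le_lt_trans (archi_boundP B_ge0); rewrite ler_pdivlMr // mulrC.
  by apply: le_trans hz _; rewrite ler_pM2l //; apply: le_trans (ler_norm _).
by have [h1 h2] := lat_point_coord_le p; split; apply: coord.
Qed.

Lemma antipodal_meets_Om x y : u x = - u y -> Om (lat_point eps x) \/ Om (lat_point eps y).
Proof.
have [sph north_out] := uSF; move=> Nxy; apply: contrapT => /not_orP[Ox Oy].
by apply: (on_sphere_neq_opp (sph x)); rewrite {2}Nxy !north_out // opprK.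
Qed.

Lemma finite_triangles_with_neighbour :
  finite_set [set T | exists T', neighbours eps u T T'].
Proof.
have [K HK] := lat_box_of_bounded; pose B := lat_box K.+1.
apply: (@sub_finite_set _ _ ((fun v => [set v.1.1; v.1.2; v.2]) @` (B `*` B `*` B))); last first.
  by apply: finite_image; do 2?apply: finite_setX; exact: finite_lat_box.
move=> T [T' nT]; have [/(is_triangleE eps_gt0)[i [j [k [eT t]]]] _ _] := nT.
have [v Tv Ov] : exists2 v, [set i; j; k] v & Om (lat_point eps v).
  move: nT; rewrite eT => /(neighboursE u eps_gt0 _ t).
  by case=> [|[|]] [_ /antipodal_meets_Om [Ov|Ov]]; eexists; try exact: Ov; rewrite /=; tauto.
have inB w : [set i; j; k] w -> B w.
  move=> Tw; have [->|wv] := pselect (w = v).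
    by have [h1 h2] := HK v Ov; split; apply: leqW.
  exact: (lat_box_adj (HK v Ov) (triangle_adj t Tv Tw (nesym wv))).
by exists ((i, j), k); [split; [split|]; apply: inB; rewrite /=; tauto | rewrite eT].
Qed.
End Finiteness.

Section Region.
Variables (R : realType) (eps : R) (u : latpt -> 'rV[R]_3) (S : set (set latpt)).
Hypotheses (eps_gt0 : 0 < eps) (regS : admissible_region eps u S).
Hypothesis u_sphere : forall i, on_sphere (u i).
Local Notation nb := (neighbours eps u).
Local Notation conn := (Defs.connected eps u).

Lemma connected_trans T1 T2 T3 : conn T1 T2 -> conn T2 T3 -> conn T1 T3.
Proof.
by move=> c12 c23; elim: c23 c12 => // T T' T'' _ IH n /IH c1; apply: conn_step c1 n.
Qed.

Lemma connected_sym T1 T2 : conn T1 T2 -> conn T2 T1.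
Proof.
elim=> [|T T' T'' _ c n]; first exact: conn_refl.
exact: connected_trans (conn_step (conn_refl _ _ _) (neighbours_sym n)) c.
Qed.

Lemma connected_last T T' : conn T T' -> T' = T \/ exists T'', nb T' T''.
Proof. by elim=> [|T1 T2 T3 _ _ n]; [left | right; exists T2; exact: neighbours_sym]. Qed.

Lemma region_nbr_closed T T' : S T -> nb T T' -> S T'.
Proof.
have [[Stri Scon] Smax] := regS; move=> ST n.
have cTT' : conn T T' := conn_step (conn_refl _ _ _) n.
suff <- : S `|` [set T'] = S by right.
apply: Smax; last exact: subsetUl.
split=> [A [/Stri|->] //|A B [SA|->] [SB|->]]; first by case: n.
- exact: Scon.
- exact: connected_trans (Scon _ _ SA ST) cTT'.
- exact: connected_sym (connected_trans (Scon _ _ SB ST) cTT').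
- exact: conn_refl.
Qed.

Lemma region_nonempty : exists T, S T.
Proof.
apply: contrapT => S0; have [_ Smax] := regS.
have T0tri : is_triangle eps [set 0; (1, 0); (0, 1)].
  by apply/(is_triangleE eps_gt0); exists 0, (1, 0), (0, 1).
suff eS : [set [set 0; (1, 0); (0, 1)]] = S by apply: S0; eexists; rewrite -eS.
apply: Smax => [|A SA]; last by case: S0; exists A.
by split=> [A ->|A B -> ->] //; exact: conn_refl.
Qed.

Lemma region_connected : connected_set nb S.
Proof.
have [[_ Scon] _] := regS; move=> T T' ST /(Scon _ _ ST) c.
elim: c ST => [T0 _|T1 T2 T3 _ IH n ST1]; first exact: connected_in_refl.
have c := IH ST1; exact: connected_in_step c (region_nbr_closed (connected_in_mem c ST1) n) n.
Qed.

Lemma region_isolated T : S T -> ~ (exists T', nb T T') -> S = [set T].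
Proof.
have [[_ Scon] _] := regS; move=> ST iso; apply/seteqP; split=> [T' ST'|_ ->] //=.
by have [//|[T'' n]] := connected_last (Scon _ _ ST' ST); case: iso; exists T''.
Qed.

Lemma region_has_neighbours T0 T1 : S T0 -> nb T0 T1 ->
  forall T, S T -> exists T', nb T T'.
Proof.
have [[_ Scon] _] := regS; move=> ST0 n01 T ST.
by have [->|] := connected_last (Scon _ _ ST0 ST); first exists T1.
Qed.

Lemma region_single_isolated T T' : S = [set T] -> ~ nb T T'.
Proof.
move=> eS n; have ST : S T by rewrite eS.
have := region_nbr_closed ST n; rewrite eS /= => eT'.
by rewrite eT' in n; exact: neighbours_irr n.
Qed.

Lemma region_leafE T : S T -> (exists T', nb T T') ->
  leaf nb S T <-> two_edges_C eps u T.
Proof.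
have [[Stri _] _] := regS; move=> ST [T' nT].
have N_nbrs := two_edges_N_neighbours u eps_gt0 (Stri _ ST).
have C_not_N := two_edges_C_not_N u eps_gt0 (Stri _ ST).
split=> [[y [Sy ny uniq_y]]|/C_not_N no2].
  apply/C_not_N => /N_nbrs[T1 [T2 [T12 n1 n2]]]; apply: T12.
  by rewrite (uniq_y T1 (region_nbr_closed ST n1) n1) (uniq_y T2 (region_nbr_closed ST n2) n2).
exists T'; split=> // [|T2 ST2 n2]; first exact: region_nbr_closed ST nT.
by apply: contrapT => T2T'; apply: no2; apply/N_nbrs; exists T2, T'.
Qed.

Lemma region_cycle_or_path : finite_set S -> (forall T, S T -> exists T', nb T T') ->
  (forall T, S T -> two_edges_N eps u T) \/
  (exists T1 T2, [/\ T1 <> T2, S T1 /\ S T2, two_edges_C eps u T1 /\ two_edges_C eps u T2,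
      (forall T, S T -> two_edges_C eps u T -> T = T1 \/ T = T2) &
      (forall T, S T -> T <> T1 -> T <> T2 -> two_edges_N eps u T)]).
Proof.
have [[Stri _] _] := regS; move=> finS nbrs.
have leafC T : S T -> leaf nb S T <-> two_edges_C eps u T.
  by move=> ST; exact: (region_leafE ST (nbrs T ST)).
have N_of_not_leaf T : S T -> ~ leaf nb S T -> two_edges_N eps u T.
  move=> ST nl; apply: contrapT => /(two_edges_C_not_N u eps_gt0 (Stri _ ST)).
  by move/(leafC T ST).
have [[L [SL leafL]]|noleaf] := pselect (exists L, S L /\ leaf nb S L); last first.
  by left=> T ST; apply: N_of_not_leaf => // lT; apply: noleaf; exists T.
have [L' [SL' L'L leafL' leaves]] := path_leaves (@neighbours_sym _ _ _)
  (neighbours_irr eps_gt0) finS region_connected (neighbours_max_degree2 eps_gt0 u_sphere (S := S))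
  SL leafL.
right; exists L, L'; split=> //.
- by move=> LL'; apply: L'L; rewrite LL'.
- by split; apply/leafC.
- by move=> T ST /(leafC T ST)/(leaves T ST).
- by move=> T ST TL TL'; apply: N_of_not_leaf => // /(leaves T ST) [].
Qed.
End Region.

Theorem lemma5p1 (R : realType) (eps : R) (Om : set (R * R))
  (u : latpt -> 'rV[R]_3) (S : set (set latpt)) :
  0 < eps -> open Om -> bounded_set Om ->
  SF eps Om u -> admissible_region eps u S ->
  exactly_one_of3
    (* (i) R is a single triangle of T_eps *)
    (exists T, is_triangle eps T /\ S = [set T])
    (* (ii) every triangle in R has two edges in N_eps(u) *)
    (forall T, S T -> two_edges_N eps u T)
    (* (iii) exactly two triangles in R have two edges in C_eps(u), all
       other triangles in R have two edges in N_eps(u) *)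
    (exists T1 T2, [/\ T1 <> T2, S T1 /\ S T2,
        two_edges_C eps u T1 /\ two_edges_C eps u T2,
        (forall T, S T -> two_edges_C eps u T -> T = T1 \/ T = T2) &
        (forall T, S T -> T <> T1 -> T <> T2 -> two_edges_N eps u T)]).
Proof.
rewrite /exactly_one_of3 => eps_gt0 _ Om_bounded uSF regS; have [[Stri _] _] := regS.
have CnotN T : S T -> two_edges_C eps u T -> ~ two_edges_N eps u T.
  by move=> ST /(two_edges_C_not_N u eps_gt0 (Stri T ST)).
have [T0 ST0] := region_nonempty eps_gt0 regS.
have [[T1 n01]|iso] := pselect (exists T1, neighbours eps u T0 T1); last first.
  have eS := region_isolated regS ST0 iso.
  left; split; first by exists T0; split=> //; exact: Stri.
  split=> [/(_ T0 ST0)/(two_edges_N_neighbours u eps_gt0 (Stri _ ST0))|].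
    by case=> T2 [_ [_ n2 _]]; apply: iso; exists T2.
  by case=> A [B [AB [SA SB] _ _ _]]; apply: AB; rewrite eS in SA SB; rewrite SA SB.
have nbrs := region_has_neighbours regS ST0 n01.
have notI : ~ exists T, is_triangle eps T /\ S = [set T].
  case=> T [_ eS]; have ST : S T by rewrite eS.
  have [T' nT] := nbrs T ST; exact: (region_single_isolated eps_gt0 regS eS nT).
have finS := sub_finite_set nbrs (finite_triangles_with_neighbour eps_gt0 Om_bounded uSF).
case: (region_cycle_or_path eps_gt0 regS uSF.1 finS nbrs) => [allN|iii].
  right; left; split=> //; split=> // -[A [_ [_ [SA _] [CA _] _ _]]].
  exact: (CnotN A SA CA (allN A SA)).
right; right; split=> //; split=> //; have [A [_ [_ [SA _] [CA _] _ _]]] := iii.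
by move/(_ A SA); exact: (CnotN A SA CA).
Qed.
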